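(* Existential second-order universal Horn logic does not capture the complexity class $\mathbf{P}$, even when restricted to finite input structures whose vocabulary includes a successor relation: there is a decision problem on such structures that is decidable in polynomial time but is not expressible by any ESO universal Horn sentence.
   Context: ESO universal Horn logic consists of sentences of the form $\exists S_1 \cdots \exists S_m\, \forall \bar{x}\, \psi$, where $S_1,\dots,S_m$ are second-order (relation) variables and $\forall \bar x\,\psi$ is a universal first-order formula whose matrix $\psi$ is a conjunction of Horn clauses with respect to the quantified relations $S_i$ (each clause contains at most one positive occurrence of an atom built from an $S_i$; atoms and negated atoms over the input vocabulary are unrestricted). A decision problem (a class of finite structures over a fixed input vocabulary) is expressed by such a sentence if a finite input structure is a yes-instance exactly when it satisfies the sentence. A successor relation is a binary relation in the input vocabulary interpreted as the successor relation of a linear order on the universe. $\mathbf{P}$ is the class of problems decidable in polynomial time. *)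

From mathcomp Require Import all_boot.
Set Implicit Arguments. Unset Strict Implicit. Unset Printing Implicit Defensive.

(* A vocabulary is the list of arities of its relation symbols.
   A finite structure has the nonempty universe 'I_(usize.+1). *)
Record structure (voc : seq nat) := Struct {
  usize : nat;
  srel : forall i : 'I_(size voc), {set (nth 0 voc i).-tuple 'I_usize.+1}
}.

Definition iso (voc : seq nat) (A B : structure voc) : Prop :=
  exists f : 'I_(usize A).+1 -> 'I_(usize B).+1,
    bijective f /\
    forall (i : 'I_(size voc)) (t : (nth 0 voc i).-tuple 'I_(usize A).+1),
      (t \in srel A i) = (map_tuple f t \in srel B i).

(* A decision problem = a class of structures closed under isomorphism. *)
Definition iso_closed (voc : seq nat) (K : structure voc -> Prop) : Prop :=
  forall A B, iso A B -> K A -> K B.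

(* The symbol s is interpreted as the successor relation of some linear
   order of the universe (the order given by the ranks p x). *)
Definition is_succ (voc : seq nat) (s : 'I_(size voc)) (A : structure voc) : Prop :=
  exists p : 'I_(usize A).+1 -> 'I_(usize A).+1, bijective p /\
    forall t : (nth 0 voc s).-tuple 'I_(usize A).+1,
      t \in srel A s <->
      exists x y, val t = [:: x; y] /\ nat_of_ord (p y) = (p x).+1.

(* Literals over first-order variables 'I_k, input vocabulary voc and
   second-order (quantified) relation variables with arities sov.
   The boolean is the polarity (true = positive literal). *)
Inductive lit (voc sov : seq nat) (k : nat) : Type :=
  | LEq : bool -> 'I_k -> 'I_k -> lit voc sov k
  | LIn : bool -> forall i : 'I_(size voc), (nth 0 voc i).-tuple 'I_k -> lit voc sov k
  | LSO : bool -> forall j : 'I_(size sov), (nth 0 sov j).-tuple 'I_k -> lit voc sov k.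

(* An ESO universal sentence  exists S_1..S_m forall x_1..x_k, /\ clauses,
   each clause being a disjunction of literals. *)
Record eso_sentence (voc : seq nat) := ESO {
  so_arities : seq nat;
  fo_nvars : nat;
  clauses : seq (seq (lit voc so_arities fo_nvars))
}.

Definition is_pos_so_lit (voc sov : seq nat) (k : nat) (l : lit voc sov k) : bool :=
  if l is LSO true _ _ then true else false.

(* Horn w.r.t. the quantified relations: each clause has at most one
   positive second-order atom; input/equality literals are unrestricted. *)
Definition is_horn (voc : seq nat) (phi : eso_sentence voc) : bool :=
  all (fun c => count (@is_pos_so_lit _ _ _) c <= 1) (clauses phi).

Definition eval_lit (voc sov : seq nat) (k : nat) (A : structure voc)
    (S : forall j : 'I_(size sov), {set (nth 0 sov j).-tuple 'I_(usize A).+1})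
    (a : 'I_k -> 'I_(usize A).+1) (l : lit voc sov k) : bool :=
  match l with
  | LEq b x y => (a x == a y) == b
  | LIn b i xs => (map_tuple a xs \in srel A i) == b
  | LSO b j xs => (map_tuple a xs \in S j) == b
  end.

Definition sat (voc : seq nat) (A : structure voc) (phi : eso_sentence voc) : Prop :=
  exists S : forall j : 'I_(size (so_arities phi)),
               {set (nth 0 (so_arities phi) j).-tuple 'I_(usize A).+1},
    forall a : 'I_(fo_nvars phi) -> 'I_(usize A).+1,
      all (fun c => has (eval_lit S a) c) (clauses phi).

Inductive move := MLeft | MRight | MStay.

(* States 'I_nst.+1 (start state 0); tape alphabet 'I_nsym.+3 with
   0 = blank, 1 = bit false, 2 = bit true. The machine halts when
   delta is undefined; it accepts iff it halts in an accepting state. *)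
Record TM := MkTM {
  tm_nst : nat;
  tm_nsym : nat;
  tm_delta : 'I_tm_nst.+1 -> 'I_tm_nsym.+3 ->
             option ('I_tm_nst.+1 * 'I_tm_nsym.+3 * move);
  tm_acc : 'I_tm_nst.+1 -> bool
}.

Section TMsem.
Variable M : TM.
Definition sym := 'I_(tm_nsym M).+3.
Definition blank : sym := inord 0.
Definition sym_of_bit (b : bool) : sym := if b then inord 2 else inord 1.

(* configuration: state, left tape (nearest cell first), head cell, right tape *)
Definition config := ('I_(tm_nst M).+1 * seq sym * sym * seq sym)%type.

Definition tm_init (w : seq bool) : config :=
  match map sym_of_bit w with
  | [::] => (ord0, [::], blank, [::])
  | a :: r => (ord0, [::], a, r)
  end.

Definition tm_step (c : config) : config :=
  let: (q, L, a, R) := c in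
  match tm_delta q a with
  | None => c
  | Some (q', b, MStay) => (q', L, b, R)
  | Some (q', b, MLeft) =>
      match L with [::] => (q', [::], blank, b :: R)
                 | x :: L' => (q', L', x, b :: R) end
  | Some (q', b, MRight) =>
      match R with [::] => (q', b :: L, blank, [::])
                 | x :: R' => (q', b :: L, x, R') end
  end.

Definition tm_halted (c : config) : bool :=
  let: (q, _, a, _) := c in if tm_delta q a is None then true else false.

Definition tm_accepting (c : config) : bool :=
  let: (q, _, _, _) := c in @tm_acc M q.
End TMsem.

Definition encode (voc : seq nat) (A : structure voc) : seq bool :=
  nseq (usize A).+1 true ++ false ::
  flatten [seq [seq t \in srel A i | t <- enum {: (nth 0 voc i).-tuple 'I_(usize A).+1}]
          | i <- enum 'I_(size voc)].

Definition in_P (voc : seq nat) (K : structure voc -> Prop) : Prop :=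
  exists (M : TM) (c d : nat),
    forall A : structure voc,
      let cfg := iter (c * (size (encode A)).+1 ^ d) (@tm_step M) (tm_init M (encode A)) in
      tm_halted cfg /\ (tm_accepting cfg <-> K A).

(* An ESO universal sentence is preserved under induced substructures: restrict
   the witnessing relations to the substructure and every universal clause stays
   true.  The first element of a two-element successor structure induces a
   one-element structure that is again a successor structure.  So no ESO
   universal sentence, Horn or not, defines the class of two-element successor
   structures on successor structures, although this class is trivially in P:
   its encodings form a finite language, which a machine simulating a finite
   automaton decides in linear time. *)

From mathcomp Require Import all_boot.
Set Implicit Arguments. Unset Strict Implicit. Unset Printing Implicit Defensive.

Section Structures.
Variable voc : seq nat.
Implicit Types A B : structure voc.

Lemma iso_usize A B : iso A B -> usize A = usize B.
Proof. by case=> f [/bij_eq_card]; rewrite !card_ord => -[]. Qed.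

Lemma iso_is_succ (s : 'I_(size voc)) A B : iso A B -> is_succ s A -> is_succ s B.
Proof.
move=> AB; have eAB : (usize A).+1 = (usize B).+1 by rewrite (iso_usize AB).
case: AB => f [f_bij f_rel] [p [p_bij p_succ]].
have [g fK gK] := f_bij.
exists (fun x => cast_ord eAB (p (g x))); split.
  apply: bij_comp; first exact: (Bijective (cast_ordK eAB) (cast_ordKV eAB)).
  exact: bij_comp p_bij (Bijective gK fK).
move=> t; have fgt : map_tuple f (map_tuple g t) = t.
  by apply: val_inj; rewrite /= -map_comp map_id_in // => x _ /=; rewrite gK.
rewrite -{1}fgt -f_rel; apply: iff_trans (p_succ _) _; split.
- case=> x [y [gtE pxy]]; exists (f x), (f y); rewrite !fK; split=> //.
  by rewrite -fgt /= -[map g t]/(val (map_tuple g t)) gtE.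
- by case=> x [y [tE pxy]]; exists (g x), (g y); rewrite /= tE.
Qed.

Lemma iso_closed_succ (s : 'I_(size voc)) (n : nat) :
  iso_closed (fun A => usize A = n /\ is_succ s A).
Proof. by move=> A B AB [<- As]; split; [rewrite (iso_usize AB) | exact: iso_is_succ As]. Qed.

Lemma sat_embedding A B (phi : eso_sentence voc) (e : 'I_(usize B).+1 -> 'I_(usize A).+1) :
  injective e ->
  (forall (i : 'I_(size voc)) (t : (nth 0 voc i).-tuple _),
     (t \in srel B i) = (map_tuple e t \in srel A i)) ->
  sat A phi -> sat B phi.
Proof.
move=> e_inj e_rel [S AS].
exists (fun j => [set t | map_tuple e t \in S j]) => a.
have mapE n (xs : n.-tuple 'I_(fo_nvars phi)) :
    map_tuple e (map_tuple a xs) = map_tuple (e \o a) xs.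
  by apply: val_inj; rewrite /= -map_comp.
have litE l : eval_lit (fun j => [set t | map_tuple e t \in S j]) a l = eval_lit S (e \o a) l.
  by case: l => [b x y | b i xs | b j xs] /=; rewrite ?(inj_eq e_inj) ?e_rel ?inE ?mapE.
by rewrite (eq_all (eq_has litE)).
Qed.

End Structures.

Definition voc1 : seq nat := [:: 2].
Definition s0 : 'I_(size voc1) := ord0.

Definition two_element_succ (A : structure voc1) : Prop := usize A = 1 /\ is_succ s0 A.

Lemma ord2P (x : 'I_2) : x = ord0 \/ x = ord_max.
Proof. by case: x => [[|[|m]] // x_lt]; [left | right]; apply: val_inj. Qed.

Lemma succ_pair_ord2 (p q : 'I_2 -> 'I_2) (t : 2.-tuple 'I_2) :
  cancel p q -> cancel q p ->
  (exists x y, val t = [:: x; y] /\ nat_of_ord (p y) = (p x).+1) <->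
  t = [tuple q ord0; q ord_max].
Proof.
move=> pK qK; split=> [[x [y [tE pxy]]] | ->]; last first.
  by exists (q ord0), (q ord_max); rewrite !qK.
have px : p x = ord0 by apply: val_inj; have := ltn_ord (p y); rewrite pxy /=; case: (p x : nat).
have py : p y = ord_max by apply: val_inj; rewrite /= pxy px.
by apply: val_inj; rewrite tE /= -px -py !pK.
Qed.

Definition chain01 : 2.-tuple 'I_2 := [tuple ord0; ord_max].
Definition chain10 : 2.-tuple 'I_2 := [tuple ord_max; ord0].

Lemma succ_rel_ord2 (r : {set 2.-tuple 'I_2}) :
  (exists p : 'I_2 -> 'I_2, bijective p /\
     forall t, t \in r <-> exists x y, val t = [:: x; y] /\ nat_of_ord (p y) = (p x).+1)
  <-> r = [set chain01] \/ r = [set chain10].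
Proof.
have chain_succ (p q : 'I_2 -> 'I_2) : cancel p q -> cancel q p -> forall t,
    t \in [set [tuple q ord0; q ord_max]] <->
    exists x y, val t = [:: x; y] /\ nat_of_ord (p y) = (p x).+1.
  move=> pK qK t; apply: iff_trans (iff_sym (succ_pair_ord2 t pK qK)).
  by rewrite inE; split=> [/eqP | ->].
split=> [[p [[q pK qK] p_succ]] | [] ->].
- have -> : r = [set [tuple q ord0; q ord_max]].
    apply/setP => t; apply/idP/idP => [/p_succ | t_chain].
      by move/(chain_succ _ _ pK qK).
    by apply/p_succ/(chain_succ _ _ pK qK).
  have q_neq : q ord0 != q ord_max by rewrite (can_eq qK).
  by case: (ord2P (q ord0)) q_neq => ->; case: (ord2P (q ord_max)) => -> //= _;
    [left | right]; congr [set _]; apply: val_inj.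
- by exists id; split; [exact: (Bijective (g := id)) | exact: (chain_succ id id)].
- have -> : chain10 = [tuple rev_ord ord0; rev_ord ord_max] by apply/val_inj/eqP.
  exists (@rev_ord 2); split; first exact: (Bijective (@rev_ordK 2) (@rev_ordK 2)).
  exact: (chain_succ _ _ (@rev_ordK 2) (@rev_ordK 2)).
Qed.

Definition point : structure voc1 := @Struct voc1 0 (fun _ => set0).
Definition two_chain : structure voc1 :=
  @Struct voc1 1 (fun _ => [set t | val t == [:: ord0; ord_max]]).

Lemma point_succ : is_succ s0 point.
Proof.
exists id; split; first exact: (Bijective (g := id)).
by move=> t; rewrite in_set0; split=> // -[x [y [_]]]; rewrite (ord1 x) (ord1 y).
Qed.

Lemma two_chain_succ : two_element_succ two_chain.
Proof. by split=> //; apply/(succ_rel_ord2 _); left; apply/setP => t; rewrite !inE. Qed.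

Lemma two_element_succ_not_eso (phi : eso_sentence voc1) :
  ~ (forall A, is_succ s0 A -> (two_element_succ A <-> sat A phi)).
Proof.
move=> phi_def; have: sat point phi.
  apply: (sat_embedding (A := two_chain) (e := fun _ => ord0)).
  - by move=> x y _; rewrite (ord1 x) (ord1 y).
  - move=> i t; rewrite in_set0 inE; apply/esym/negP => /eqP.
    move/(congr1 (fun s => ord_max \in s)); rewrite mem_seq2 eqxx orbT.
    by case/mapP.
  - exact: (phi_def two_chain two_chain_succ.2).1 two_chain_succ.
by case/(phi_def point point_succ).2.
Qed.

Lemma tm_step_halted (M : TM) (c : config M) : tm_halted c -> tm_step c = c.
Proof. by case: c => [[[q L] a] R] /=; case: tm_delta. Qed.

Record dfa := DFA {
  dfa_state : finType;
  dfa_start : dfa_state;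
  dfa_next : dfa_state -> bool -> dfa_state;
  dfa_accept : pred dfa_state
}.

Definition dfa_accepts (D : dfa) (w : seq bool) : bool :=
  dfa_accept (foldl (@dfa_next D) (dfa_start D) w).

Section DfaMachine.
Variable D : dfa.
Local Notation S := (dfa_state D).

(* State [ord0] of the machine stands for the start state of [D]; every
   other state [lift ord0 (enum_rank q)] stands for [q]. *)
Definition dfa_of_tm_state (i : 'I_#|S|.+1) : S :=
  if unlift ord0 i is Some j then enum_val j else dfa_start D.

Definition tm_state_of_dfa (q : S) : 'I_#|S|.+1 := lift ord0 (enum_rank q).

Lemma tm_state_of_dfaK : cancel tm_state_of_dfa dfa_of_tm_state.
Proof. by move=> q; rewrite /dfa_of_tm_state liftK enum_rankK. Qed.

Definition dfa_tm : TM :=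
  @MkTM #|S| 0
    (fun i a => if val a is 0 then None else
       Some (tm_state_of_dfa (dfa_next (dfa_of_tm_state i) (val a == 2)), a, MRight))
    (fun i => dfa_accept (dfa_of_tm_state i)).

Definition scan_config (i : 'I_#|S|.+1) (L : seq (sym dfa_tm)) (w : seq bool)
    : config dfa_tm :=
  if map (@sym_of_bit dfa_tm) w is a :: r then (i, L, a, r) else (i, L, blank dfa_tm, [::]).

Lemma val_sym_of_bit (b : bool) : val (@sym_of_bit dfa_tm b) = (if b then 2 else 1).
Proof. by case: b; rewrite /= inordK. Qed.

Lemma tm_step_scan i L b w :
  tm_step (scan_config i L (b :: w)) =
  scan_config (tm_state_of_dfa (dfa_next (dfa_of_tm_state i) b)) (@sym_of_bit dfa_tm b :: L) w.
Proof. by rewrite /scan_config /= val_sym_of_bit; case: b; case: w. Qed.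

Lemma iter_tm_step_scan w i L :
  exists i' L', iter (size w) (tm_step (M:=dfa_tm)) (scan_config i L w) = scan_config i' L' [::]
    /\ dfa_of_tm_state i' = foldl (@dfa_next D) (dfa_of_tm_state i) w.
Proof.
elim: w i L => [|b w IHw] i L; first by exists i, L.
rewrite [size _]/= iterSr tm_step_scan.
have [i' [L' [-> state_w]]] :=
  IHw (tm_state_of_dfa (dfa_next (dfa_of_tm_state i) b)) (@sym_of_bit dfa_tm b :: L).
by exists i', L'; rewrite state_w tm_state_of_dfaK.
Qed.

Lemma scan_config_halted i L : tm_halted (scan_config i L [::]).
Proof. by rewrite /scan_config /= /blank inordK. Qed.

Lemma dfa_tm_decides w :
  let c := iter (size w).+1 (tm_step (M:=dfa_tm)) (tm_init dfa_tm w) in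
  tm_halted c /\ tm_accepting c = dfa_accepts D w.
Proof.
have -> : tm_init dfa_tm w = scan_config ord0 [::] w by rewrite /tm_init /scan_config; case: map.
have [i [L [run_w state_w]]] := iter_tm_step_scan w ord0 [::].
rewrite iterS run_w tm_step_halted; last exact: scan_config_halted.
split; first exact: scan_config_halted.
by rewrite /= state_w /dfa_of_tm_state unlift_none.
Qed.

End DfaMachine.

Section FiniteLanguage.
Variable words : seq (seq bool).
Let N := \max_(u <- words) size u.

(* The state is the input read so far, or [None] once it is longer than any word. *)
Definition prefix_dfa : dfa :=
  @DFA (option (N.-bseq bool)) (insub [::])
    (fun q b => if q is Some s then insub (rcons s b) else None)
    (fun q => if q is Some s then val s \in words else false).

Lemma prefix_dfa_run u w :
  foldl (@dfa_next prefix_dfa) (insub u) w = insub (u ++ w).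
Proof.
elim: w u => [|b w IHw] u /=; first by rewrite cats0.
rewrite -cat_rcons -IHw; congr foldl.
case: insubP => [s _ <- //| too_long].
by rewrite insubN // -ltnNge size_rcons ltnW // ltnNge.
Qed.

Lemma prefix_dfa_accepts w : dfa_accepts prefix_dfa w = (w \in words).
Proof.
rewrite /dfa_accepts /= prefix_dfa_run /=.
case: insubP => [s _ -> //| too_long].
apply/esym/negbTE; apply: contra too_long => w_in.
exact: (leq_bigmax_seq w).
Qed.

End FiniteLanguage.

Definition table (T : finType) (r : {set T}) : seq bool := [seq t \in r | t <- enum T].

Lemma table_inj (T : finType) : injective (@table T).
Proof. by move=> r r' /eq_in_map rr'; apply/setP => t; apply: rr'; rewrite mem_enum. Qed.

Lemma nseq_cons_false_inj m n s s' :
  nseq m true ++ false :: s = nseq n true ++ false :: s' -> m = n /\ s = s'.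
Proof. by elim: m n => [|m IHm] [|n] //= [] => [-> | /IHm [-> ->]]. Qed.

Lemma encode_voc1 (A : structure voc1) :
  encode A = nseq (usize A).+1 true ++ false :: table (srel A s0).
Proof. by rewrite /encode enum_ordSl enum_ord0 /= cats0. Qed.

(* The enumeration order of tuples is sealed, so the two codes are built with
   [table] rather than written out as bit strings. *)
Definition two_chain_codes : seq (seq bool) :=
  [seq nseq 2 true ++ false :: table [set t] | t <- [:: chain01; chain10]].

Lemma two_element_succ_encode A : two_element_succ A <-> encode A \in two_chain_codes.
Proof.
rewrite encode_voc1; case: A => n r; split=> [[/= n1 r_succ] | /mapP [t t_chain]].
  subst n; have [] := (succ_rel_ord2 (r s0)).1 r_succ => ->.
    exact: (map_f _ (mem_head _ _)).
  by apply: map_f; rewrite mem_seq2 eqxx orbT.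
case/nseq_cons_false_inj => -[n1]; subst n => /table_inj /= r_t.
split=> //; apply/(succ_rel_ord2 (r s0)).
by move: t_chain r_t; rewrite mem_seq2 => /orP [] /eqP -> ->; [left | right].
Qed.

Lemma two_element_succ_in_P : in_P two_element_succ.
Proof.
exists (dfa_tm (prefix_dfa two_chain_codes)), 1, 1 => A; rewrite mul1n expn1.
have [halted accepting] := dfa_tm_decides (prefix_dfa two_chain_codes) (encode A).
split=> //; rewrite accepting prefix_dfa_accepts.
exact: iff_sym (two_element_succ_encode A).
Qed.

Theorem theorem1 :
  exists (voc : seq nat) (s : 'I_(size voc)),
    nth 0 voc s = 2 /\
    exists K : structure voc -> Prop,
      (forall A, K A -> is_succ s A) /\
      iso_closed K /\
      in_P K /\
      ~ (exists phi : eso_sentence voc,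
           is_horn phi /\ forall A, is_succ s A -> (K A <-> sat A phi)).
Proof.
exists voc1, s0; split=> //; exists two_element_succ.
split; first by move=> A [].
split; first exact: iso_closed_succ.
split; first exact: two_element_succ_in_P.
by case=> phi [_]; apply: two_element_succ_not_eso.
Qed.
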